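(* Let $n$ be a prime and $k$ an integer with $2\le k<n/2$, and let $N=\binom{n}{k}/n$. Regard each $\underline{\mathbf{C}}_{\underline{g}}$ as the set of $k$-subsets of $[n]$ formed by the underlying sets of its vectors. Then the family $\{\underline{\mathbf{C}}_{\underline{g}}:\underline{g}\in\underline{\mathbf{G}}_{\mathrm{tot}}\}$ has exactly $N$ distinct members; any two of them are either equal or disjoint; and their union is the set $\binom{[n]}{k}$ of all $k$-subsets of $[n]$. Consequently, choosing generators $\underline{g}_1,\dots,\underline{g}_N\in\underline{\mathbf{G}}_{\mathrm{tot}}$ with pairwise distinct sets $\underline{\mathbf{C}}_{\underline{g}_i}$, the corresponding cycles $\boldsymbol{\mathcal{S}}_{\underline{g}_1},\dots,\boldsymbol{\mathcal{S}}_{\underline{g}_N}$ are Hamiltonian (Berge) cycles of $K_n^k$ whose hyperedge sets partition $\binom{[n]}{k}$, i.e. they form a Hamiltonian decomposition of $K_n^k$.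
   Context: $[n]=\{1,\dots,n\}$; reduction mod $n$ is entrywise with representatives in $[n]$, and $\underline{1}$ is the all-ones vector of length $k$. For an integer vector $\underline{g}=[g_1,\dots,g_k]$ with $g_i\ge1$ for $i\in[k-1]$ and $g_1+\dots+g_{k-1}\le n-1$, the representative vector is $\underline{r}_{\underline{g}}=[1,1+g_1,1+g_1+g_2,\dots,1+g_1+\cdots+g_{k-1}]$ and $\underline{\mathbf{C}}_{\underline{g}}=\{\underline{r}_{\underline{g}}+p\cdot\underline{1}\ (\mathrm{mod}\ n):p=0,\dots,n-1\}$. The generator set: let $\sigma_{\min}=k-1$ and $\sigma_{\max}=n-\lceil n/k\rceil$. For $\sigma\in[\sigma_{\min},\sigma_{\max}]$ let $\underline{\mathbf{S}}_\sigma=\{[c_1,\dots,c_{k-1}]\in\mathbb{Z}^{k-1}:\sum_i c_i=\sigma,\ 1\le c_i\le n-\sigma\}$ and $\underline{\mathbf{G}}_\sigma=\{[c_1,\dots,c_{k-1},m]:[c_1,\dots,c_{k-1}]\in\underline{\mathbf{S}}_\sigma\}$ where $m=-\sigma$ if $\sigma\le\lfloor n/2\rfloor$ and $m=n-\sigma$ otherwise. Finally $\underline{\mathbf{G}}_{\mathrm{tot}}=\bigcup_{\sigma=\sigma_{\min}}^{\sigma_{\max}}\underline{\mathbf{G}}_\sigma$. For $\underline{g}\in\underline{\mathbf{G}}_{\mathrm{tot}}$, the cycle $\boldsymbol{\mathcal{S}}_{\underline{g}}$ is $(v_0,\mathcal{E}_0,v_1,\mathcal{E}_1,\dots,v_{n-1},\mathcal{E}_{n-1},v_0)$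 with $v_p=1+p\,g_1\pmod n$ and $\mathcal{E}_p$ the set of entries of $\underline{r}_{\underline{g}}+p\,g_1\cdot\underline{1}\pmod n$. The complete $k$-uniform hypergraph $K_n^k$ has vertex set $[n]$ and every $k$-subset of $[n]$ as a hyperedge. A (Berge) Hamiltonian cycle is a sequence $(v_1,\mathcal{E}_1,v_2,\dots,v_n,\mathcal{E}_n,v_1)$ with $v_1,\dots,v_n$ a permutation of $[n]$, $\mathcal{E}_1,\dots,\mathcal{E}_n$ distinct hyperedges, and $v_i,v_{i+1}\in\mathcal{E}_i$ (indices mod $n$). A Hamiltonian decomposition of $K_n^k$ is a partition of its hyperedge set into $N$ sets each of which is the hyperedge set of a Hamiltonian cycle. *)

From HB Require Import structures.
From mathcomp Require Import all_boot all_order all_algebra.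
Unset Printing Implicit Defensive.
Import Order.TTheory GRing.Theory Num.Theory.

(* Vertices [n] = {1,...,n} are the nonzero elements of 'I_n.+1. *)

(* reduction mod n with representative in [n] *)
Definition red (n : nat) (x : int) : nat := (absz (modz (x - 1)%R (Posz n))).+1.

Definition rep (g : seq int) : seq int :=
  mkseq (fun i => (1 + \sum_(j < i) g`_j)%R) (size g).

Definition shiftv (n : nat) (v : seq int) (t : int) : seq nat :=
  [seq red n (x + t)%R | x <- v].

Definition toset (n : nat) (s : seq nat) : {set 'I_n.+1} :=
  [set i : 'I_n.+1 | nat_of_ord i \in s].

Definition Cset (n : nat) (g : seq int) : {set {set 'I_n.+1}} :=
  [set toset n (shiftv n (rep g) (Posz p)) | p : 'I_n].

Definition inGtot (n k : nat) (g : seq int) : Prop :=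
  exists sigma : nat,
    [/\ k.-1 <= sigma, sigma <= n - (n + k.-1) %/ k &
      exists c : seq nat,
        [/\ size c = k.-1, sumn c = sigma,
            all (fun x => (0 < x) && (x <= n - sigma)) c &
            g = rcons [seq (Posz x) | x <- c]
                  (if sigma <= n %/ 2 then (- Posz sigma)%R else Posz (n - sigma)%N)]].

Definition hyperedge (n k : nat) (E : {set 'I_n.+1}) : bool :=
  (#|E| == k) && [forall i in E, 0 < nat_of_ord i].

Definition hyperedges (n k : nat) : {set {set 'I_n.+1}} := [set E | hyperedge n k E].

(* Berge Hamiltonian cycle (v_0, E_0, v_1, ..., v_{n-1}, E_{n-1}, v_0) of K_n^k *)
Definition ham_cycle (n k : nat) (vs : seq 'I_n.+1) (Es : seq {set 'I_n.+1}) : Prop :=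
  [/\ size vs = n, uniq vs & all (fun v : 'I_n.+1 => 0 < nat_of_ord v) vs] /\
  [/\ size Es = n, uniq Es, all (hyperedge n k) Es &
      forall i, i < n ->
        (nth ord0 vs i \in nth set0 Es i) /\ (nth ord0 vs ((i + 1) %% n) \in nth set0 Es i)].

Definition cyc_vs (n : nat) (g : seq int) : seq 'I_n.+1 :=
  [seq (inord (red n (1 + (Posz p) * head 0 g)%R) : 'I_n.+1) | p <- iota 0 n].

Definition cyc_Es (n : nat) (g : seq int) : seq {set 'I_n.+1} :=
  [seq toset n (shiftv n (rep g) ((Posz p) * head 0 g)%R) | p <- iota 0 n].

(* Shifting a vector by p 1 rotates its underlying set, so C_g is the orbit of
   the set of entries of r_g under the rotation i |-> i + 1 of [n].  A rotation
   by t changes the sum of the elements of a k-set by k t (mod n); as n is prime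
   and 0 < k < n, only rotations with n | t fix a k-set, so every orbit has n
   members and the C(n, k) k-sets fall into C(n, k) / n orbits.  Each orbit is
   some C_g: rotate a k-set so that it contains 1 and its largest element L is
   least possible; then no gap between consecutive elements exceeds n + 1 - L,
   which, with sigma = L - 1, are the constraints defining G_tot.  Finally the
   p-th edge of S_g is the rotation of r_g by p g_1 with g_1 invertible mod n,
   so the n edges of S_g are the n members of C_g, and since 1 and 1 + g_1 are
   entries of r_g, consecutive vertices 1 + p g_1 lie in the edge between them. *)

From mathcomp Require Import all_boot all_order all_algebra.
From mathcomp Require Import zify.
From Stdlib Require Import Lia.
Import GRing.Theory.

Set Implicit Arguments.
Unset Strict Implicit.

Definition wrap (n m : nat) : nat := ((m + n.-1) %% n).+1.

Section Residues.

Variable n : nat.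
Hypothesis n_gt0 : 0 < n.

Lemma wrap_le m : wrap n m <= n.
Proof. by rewrite /wrap ltn_pmod. Qed.

Lemma wrapE m : wrap n m = m %[mod n].
Proof.
by rewrite /wrap -addn1 modnDml -addnA addn1 prednK // modnDr.
Qed.

Lemma eq_wrap a b : a = b %[mod n] -> wrap n a = wrap n b.
Proof. by move=> h; rewrite /wrap -modnDml h modnDml. Qed.

Lemma wrap_inj a b : wrap n a = wrap n b -> a = b %[mod n].
Proof. by move=> e; rewrite -wrapE -[RHS]wrapE e. Qed.

Lemma wrap_id m : 0 < m <= n -> wrap n m = m.
Proof.
case/andP=> m0 mn; rewrite /wrap.
have -> : m + n.-1 = m.-1 + n by lia.
rewrite modnDr modn_small; lia.
Qed.

Lemma eq_mod_small a b : 0 < a <= n -> 0 < b <= n -> a = b %[mod n] -> a = b.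
Proof. by move=> ha hb e; rewrite -(wrap_id ha) -(wrap_id hb); apply: eq_wrap. Qed.

Lemma red_Posz m : red n (Posz m) = wrap n m.
Proof.
rewrite /red /wrap.
have -> : (Posz m - 1 = (-1) * Posz n + Posz (m + n.-1))%R.
  rewrite PoszD; have -> : Posz n.-1 = (Posz n - 1)%R by rewrite -subn1 subzn.
  rewrite mulN1r; lia.
by rewrite modzMDl modz_nat.
Qed.

End Residues.

Lemma eqn_modMl_prime p c a b : prime p -> ~~ (p %| c) ->
  (c * a == c * b %[mod p]) = (a == b %[mod p]).
Proof.
move=> p_pr pNc; wlog le_ba : a b / b <= a.
  by move=> W; case: (leqP b a) => [|/ltnW] /W //; rewrite eq_sym [RHS]eq_sym.
by rewrite !eqn_mod_dvd ?leq_mul2l ?le_ba ?orbT // -mulnBr Euclid_dvdM // (negPf pNc).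
Qed.

Definition on_vertices {n} (E : {set 'I_n.+1}) : bool := [forall i in E, 0 < nat_of_ord i].

Definition rot {n} (t : nat) (E : {set 'I_n.+1}) : {set 'I_n.+1} :=
  [set inord (wrap n (nat_of_ord i + t)) | i in E].

Definition rot_orbit {n} (E : {set 'I_n.+1}) : {set {set 'I_n.+1}} :=
  [set rot (nat_of_ord p) E | p : 'I_n].

Section Rotation.

Variable n : nat.
Hypothesis n_gt0 : 0 < n.
Implicit Types (E F : {set 'I_n.+1}) (s t : nat).

Lemma val_inord_wrap m : nat_of_ord (inord (wrap n m) : 'I_n.+1) = wrap n m.
Proof. by rewrite inordK // ltnS wrap_le. Qed.

Lemma on_verticesP E : reflect {in E, forall i : 'I_n.+1, 0 < i <= n} (on_vertices E).
Proof.
apply: (iffP forall_inP) => h i /h; last by case/andP.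
by move=> ->; rewrite -ltnS ltn_ord.
Qed.

Lemma eq_rot_mod s t E : s = t %[mod n] -> rot s E = rot t E.
Proof.
move=> h; apply: eq_imset => i; congr inord; apply: eq_wrap.
by rewrite -modnDmr h modnDmr.
Qed.

Lemma rotD s t E : rot s (rot t E) = rot (t + s) E.
Proof.
rewrite /rot -imset_comp; apply: eq_imset => i /=.
congr inord; rewrite val_inord_wrap; apply: eq_wrap.
by rewrite addnA -modnDml wrapE // modnDml.
Qed.

Lemma rot0 E : on_vertices E -> rot 0 E = E.
Proof.
move/on_verticesP=> h; rewrite /rot -[RHS]imset_id; apply: eq_in_imset => i /h iE.
by apply: val_inj; rewrite /= addn0 wrap_id // inordK // ltnS; case/andP: iE.
Qed.

Lemma rot_on_vertices t E : on_vertices (rot t E).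
Proof. by apply/forall_inP => j /imsetP [i _ ->]; rewrite val_inord_wrap. Qed.

Lemma rot_inj t E : on_vertices E ->
  {in E &, injective (fun i : 'I_n.+1 => inord (wrap n (i + t)) : 'I_n.+1)}.
Proof.
move/on_verticesP=> h i j /h hi /h hj /(congr1 (@nat_of_ord _)).
rewrite !val_inord_wrap => /(wrap_inj n_gt0)/eqP; rewrite eqn_modDr => /eqP e.
by apply: val_inj; apply: (eq_mod_small n_gt0).
Qed.

Lemma card_rot t E : on_vertices E -> #|rot t E| = #|E|.
Proof. by move=> hE; apply: card_in_imset; apply: rot_inj. Qed.

Lemma sum_rot t E : on_vertices E ->
  \sum_(i in rot t E) nat_of_ord i = \sum_(i in E) nat_of_ord i + #|E| * t %[mod n].
Proof.
move=> hE; rewrite /rot big_imset /=; last exact: rot_inj.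
rewrite -modn_summ.
under eq_bigr => i _ do rewrite val_inord_wrap wrapE //.
by rewrite modn_summ big_split /= sum_nat_const.
Qed.

Lemma mem_rot_orbit t E : rot t E \in rot_orbit E.
Proof.
apply/imsetP; exists (Ordinal (ltn_pmod t n_gt0)) => //=.
by apply: eq_rot_mod; rewrite modn_mod.
Qed.

Lemma rot_orbit_refl E : on_vertices E -> E \in rot_orbit E.
Proof. by move=> hE; rewrite -{1}(rot0 hE) mem_rot_orbit. Qed.

Lemma rot_orbit_eq E F : F \in rot_orbit E -> rot_orbit F = rot_orbit E.
Proof.
case/imsetP=> q _ ->; apply/setP => X; apply/idP/idP; case/imsetP=> p _ ->.
  by rewrite rotD mem_rot_orbit.
rewrite (@eq_rot_mod p (q + (p + n - q))); first by rewrite -rotD mem_rot_orbit.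
have -> : q + (p + n - q) = p + n by have := ltn_ord q; lia.
by rewrite modnDr.
Qed.

Lemma rot_orbit_eq_or_disjoint E F :
  rot_orbit E = rot_orbit F \/ [disjoint rot_orbit E & rot_orbit F].
Proof.
have [|] := boolP [disjoint rot_orbit E & rot_orbit F]; first by right.
rewrite -setI_eq0 => /set0Pn [X /setIP [hE hF]].
by left; rewrite -(rot_orbit_eq hE) (rot_orbit_eq hF).
Qed.

Lemma mem_rot_orbitP E X : X \in rot_orbit E -> exists t, X = rot t E.
Proof. by case/imsetP=> p _ ->; exists p. Qed.

End Rotation.

Section PrimeRotation.

Variable n : nat.
Hypothesis n_prime : prime n.
Implicit Types (E : {set 'I_n.+1}).

Lemma rot_inj_mod E a b : on_vertices E -> 0 < #|E| < n ->
  rot a E = rot b E -> a = b %[mod n].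
Proof.
move=> hE /andP [E_gt0 En] eab; have n_gt0 := prime_gt0 n_prime.
have : #|E| * a = #|E| * b %[mod n].
  apply/eqP; rewrite -(eqn_modDl (\sum_(i in E) nat_of_ord i)).
  by rewrite -!sum_rot // eab.
move/eqP; rewrite eqn_modMl_prime //; first by move/eqP.
by apply/negP => /(dvdn_leq E_gt0); rewrite leqNgt En.
Qed.

Lemma card_rot_orbit E : on_vertices E -> 0 < #|E| < n -> #|rot_orbit E| = n.
Proof.
move=> hE hc; rewrite card_imset ?card_ord // => p q /(rot_inj_mod hE hc).
by rewrite !modn_small // => /val_inj.
Qed.

End PrimeRotation.

Definition rep_nat (k : nat) (c : seq nat) : seq nat :=
  mkseq (fun i => 1 + sumn (take i c)) k.

Lemma sum_rcons_Posz c m i : i <= size c ->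
  (\sum_(j < i) (rcons [seq Posz x | x <- c] m)`_j)%R = Posz (sumn (take i c)).
Proof.
elim: i => [|i IH] hi; first by rewrite big_ord0 take0.
rewrite big_ord_recr /= IH ?(ltnW hi) // (take_nth 0 hi) sumn_rcons PoszD.
by rewrite nth_rcons size_map hi (nth_map 0).
Qed.

Lemma rep_rcons_Posz k c m : 0 < k -> size c = k.-1 ->
  rep (rcons [seq Posz x | x <- c] m) = [seq Posz x | x <- rep_nat k c].
Proof.
move=> k_gt0 sc; apply: (@eq_from_nth _ 0%R).
  by rewrite /rep /rep_nat /mkseq !size_map !size_iota size_rcons size_map sc prednK.
rewrite /rep size_mkseq size_rcons size_map => i hi.
have ik : i < k by rewrite -(prednK k_gt0) -sc.
rewrite nth_mkseq // (nth_map 0) ?size_mkseq // nth_mkseq //.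
by rewrite sum_rcons_Posz // sc -ltnS prednK.
Qed.

Lemma sumn_take_le c i : sumn (take i c) <= sumn c.
Proof. by rewrite -{2}(cat_take_drop i c) sumn_cat leq_addr. Qed.

Lemma sumn_take_lt c i j : all (fun x => 0 < x) c -> i < j -> j <= size c ->
  sumn (take i c) < sumn (take j c).
Proof.
move=> /allP c_gt0; elim: j => [//|j IH] ij jc.
rewrite (take_nth 0 jc) sumn_rcons.
have cj : 0 < nth 0 c j by apply: c_gt0; rewrite mem_nth.
case: (ltngtP i j) => [lt|gt|->]; [have := IH lt (ltnW jc) | |]; lia.
Qed.

Lemma size_rep_nat k c : size (rep_nat k c) = k.
Proof. exact: size_mkseq. Qed.

Lemma rep_nat_uniq k c : size c = k.-1 -> all (fun x => 0 < x) c -> uniq (rep_nat k c).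
Proof.
move=> sc c_gt0; apply/mkseq_uniqP => i j; rewrite !inE => ik jk /eqP.
rewrite eqn_add2l => /eqP e.
have ic : i <= size c by rewrite sc; lia.
have jc : j <= size c by rewrite sc; lia.
by case: (ltngtP i j) => // [/sumn_take_lt|/sumn_take_lt] => /(_ c c_gt0);
   [move/(_ jc) | move/(_ ic)]; rewrite e ltnn.
Qed.

Lemma rep_nat_range n k c : sumn c < n -> all (fun x => 0 < x <= n) (rep_nat k c).
Proof. by move=> cn; apply/allP => x /mapP [i _ ->]; have := sumn_take_le c i; lia. Qed.

Lemma toset_on_vertices n s : all (fun x => 0 < x) s -> on_vertices (toset n s).
Proof. by move/allP => h; apply/forall_inP => i; rewrite inE => /h. Qed.

Lemma card_toset n s : uniq s -> all (fun x => x <= n) s -> #|toset n s| = size s.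
Proof.
move=> us /allP sn.
have -> : toset n s = [set i in [seq (inord x : 'I_n.+1) | x <- s]].
  apply/setP => i; rewrite !inE; apply/idP/mapP.
  - by move=> h; exists (nat_of_ord i) => //; rewrite inord_val.
  - by case=> x xs ->; rewrite inordK // ltnS sn.
rewrite cardsE (card_uniqP _) ?size_map // map_inj_in_uniq // => x y xs ys e.
by rewrite -(@inordK n x) ?ltnS ?sn // e inordK // ltnS sn.
Qed.

Lemma shiftv_Posz n s t : 0 < n ->
  shiftv n [seq Posz x | x <- s] (Posz t) = [seq wrap n (x + t) | x <- s].
Proof.
by move=> n_gt0; rewrite /shiftv -map_comp; apply: eq_map => x /=; rewrite -PoszD red_Posz.
Qed.

Lemma toset_shiftv n s t : 0 < n -> all (fun x => x <= n) s ->
  toset n (shiftv n [seq Posz x | x <- s] (Posz t)) = rot t (toset n s).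
Proof.
move=> n_gt0 /allP sn; rewrite shiftv_Posz //; apply/setP => i.
rewrite inE; apply/mapP/imsetP.
- case=> x xs ix; exists (inord x : 'I_n.+1); first by rewrite inE inordK // ltnS sn.
  by apply: val_inj; rewrite /= val_inord_wrap // inordK // ltnS sn.
- by case=> j; rewrite inE => js ->; exists (nat_of_ord j); rewrite ?val_inord_wrap.
Qed.

Lemma mem_rot_toset n s x t : 0 < n -> x \in s -> x <= n ->
  (inord (wrap n (x + t)) : 'I_n.+1) \in rot t (toset n s).
Proof.
move=> n_gt0 xs xn; have -> : x = nat_of_ord (inord x : 'I_n.+1) by rewrite inordK.
by apply: imset_f; rewrite inE inordK.
Qed.

Lemma inGtotP n k g : 0 < n -> 0 < k -> inGtot n k g ->
  exists c m, [/\ g = rcons [seq Posz x | x <- c] m, size c = k.-1,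
                  all (fun x => 0 < x) c & sumn c < n].
Proof.
move=> n_gt0 k_gt0 [sig [_ sig_le [c [sc sigE c_range ->]]]].
subst sig.
exists c; eexists; split; [by [] | by [] | |].
  by apply/allP => x /(allP c_range) /andP [].
suff : 0 < (n + k.-1) %/ k by lia.
by rewrite divn_gt0 //; lia.
Qed.

Section BaseSet.

Variables (n k : nat) (c : seq nat).
Hypotheses (n_gt0 : 0 < n) (k_gt0 : 0 < k) (sc : size c = k.-1).
Hypotheses (c_gt0 : all (fun x => 0 < x) c) (cn : sumn c < n).

Lemma rep_nat_le : all (fun x => x <= n) (rep_nat k c).
Proof. by apply/allP => x /(allP (rep_nat_range k cn)) /andP []. Qed.

Lemma hyperedge_rep_nat : hyperedge n k (toset n (rep_nat k c)).
Proof.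
rewrite /hyperedge card_toset ?size_rep_nat ?eqxx ?rep_nat_uniq ?rep_nat_le //=.
by apply: toset_on_vertices; apply/allP => x /(allP (rep_nat_range k cn)) /andP [].
Qed.

Lemma Cset_rcons_Posz m :
  Cset n (rcons [seq Posz x | x <- c] m) = rot_orbit (toset n (rep_nat k c)).
Proof.
rewrite /Cset /rot_orbit (rep_rcons_Posz _ k_gt0 sc); apply: eq_imset => p.
by rewrite toset_shiftv // rep_nat_le.
Qed.

End BaseSet.

Lemma Cset_hyperedge n k g : 0 < n -> 0 < k -> inGtot n k g ->
  exists2 B, hyperedge n k B & Cset n g = rot_orbit B.
Proof.
move=> n_gt0 k_gt0 /(inGtotP n_gt0 k_gt0) [c [m [-> sc c_gt0 cn]]].
by exists (toset n (rep_nat k c)); [apply: hyperedge_rep_nat | apply: Cset_rcons_Posz].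
Qed.

Section Cycle.

Variables (n k c0 : nat) (c : seq nat) (m : int).
Hypotheses (n_prime : prime n) (kn : k < n) (sc : size (c0 :: c) = k.-1).
Hypotheses (c_gt0 : all (fun x => 0 < x) (c0 :: c)) (cn : sumn (c0 :: c) < n).

Let n_gt0 : 0 < n := prime_gt0 n_prime.
Let k_gt1 : 1 < k. Proof. by move: sc => /=; lia. Qed.
Let k_gt0 : 0 < k := ltnW k_gt1.
Let g := rcons [seq Posz x | x <- c0 :: c] m.
Let B := toset n (rep_nat k (c0 :: c)).

Lemma cyc_Es_rot : cyc_Es n g = [seq rot (p * c0) B | p <- iota 0 n].
Proof.
rewrite /cyc_Es (rep_rcons_Posz _ k_gt0 sc); apply: eq_map => p /=.
by rewrite -PoszM toset_shiftv // rep_nat_le.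
Qed.

Lemma cyc_vs_wrap : cyc_vs n g = [seq inord (wrap n (1 + p * c0)) | p <- iota 0 n].
Proof. by apply: eq_map => p /=; rewrite -PoszM -PoszD red_Posz. Qed.

Let c0_gt0 : 0 < c0. Proof. by case/andP: c_gt0. Qed.
Let c0_lt : c0 < n. Proof. by move: cn => /=; lia. Qed.

Let hB : hyperedge n k B.
Proof. exact: hyperedge_rep_nat. Qed.

Let B_vertices : on_vertices B. Proof. by case/andP: hB. Qed.

Let card_B : 0 < #|B| < n. Proof. by case/andP: hB => /eqP ->; rewrite k_gt0. Qed.

Lemma eq_mul_c0_mod p q : p < n -> q < n -> p * c0 = q * c0 %[mod n] -> p = q.
Proof.
move=> pn qn /eqP; rewrite mulnC [q * _]mulnC eqn_modMl_prime //; last first.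
  by apply/negP => /(dvdn_leq c0_gt0); rewrite leqNgt c0_lt.
by rewrite !modn_small // => /eqP.
Qed.

Lemma one_c0_mem_rep_nat : (1 \in rep_nat k (c0 :: c)) && (1 + c0 \in rep_nat k (c0 :: c)).
Proof.
have mem i : i < k -> nth 0 (rep_nat k (c0 :: c)) i \in rep_nat k (c0 :: c).
  by move=> ik; rewrite mem_nth ?size_rep_nat.
by have := mem 0 k_gt0; have := mem 1 k_gt1; rewrite !nth_mkseq //= take0 !addn0 => -> ->.
Qed.

Lemma cyc_vs_vertices :
  [/\ size (cyc_vs n g) = n, uniq (cyc_vs n g)
    & all (fun v : 'I_n.+1 => 0 < nat_of_ord v) (cyc_vs n g)].
Proof.
rewrite cyc_vs_wrap size_map size_iota; split => //.
  rewrite map_inj_in_uniq ?iota_uniq // => p q; rewrite !mem_iota /= => pn qn.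
  move/(congr1 (@nat_of_ord _)); rewrite !val_inord_wrap //.
  by move/(wrap_inj n_gt0)/eqP; rewrite eqn_modDl => /eqP /eq_mul_c0_mod; apply.
by apply/allP => v /mapP [p _ ->]; rewrite val_inord_wrap.
Qed.

Lemma cyc_Es_hyperedges :
  [/\ size (cyc_Es n g) = n, uniq (cyc_Es n g) & all (hyperedge n k) (cyc_Es n g)].
Proof.
rewrite cyc_Es_rot size_map size_iota; split => //.
  rewrite map_inj_in_uniq ?iota_uniq // => p q; rewrite !mem_iota /= => pn qn.
  by move/(rot_inj_mod n_prime B_vertices card_B)/eq_mul_c0_mod; apply.
apply/allP => E /mapP [p _ ->]; rewrite /hyperedge card_rot //.
by case/andP: hB => -> _; apply: rot_on_vertices.
Qed.

Lemma cyc_consecutive i : i < n ->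
  (nth ord0 (cyc_vs n g) i \in nth set0 (cyc_Es n g) i) /\
  (nth ord0 (cyc_vs n g) ((i + 1) %% n) \in nth set0 (cyc_Es n g) i).
Proof.
move=> i_lt; case/andP: one_c0_mem_rep_nat => one_in c0_in.
rewrite cyc_vs_wrap cyc_Es_rot !(nth_map 0) ?size_iota ?ltn_pmod // !nth_iota ?ltn_pmod //.
rewrite !add0n; split; first by apply: mem_rot_toset.
(* v_(i+1) = 1 + (i+1) c0 is the image of the entry 1 + c0 of r_g under the shift i c0. *)
rewrite (@eq_wrap n (1 + (i + 1) %% n * c0) (1 + c0 + i * c0)).
  by apply: mem_rot_toset => //; move: cn => /=; lia.
by rewrite -modnDmr modnMml modnDmr; congr (_ %% _); lia.
Qed.

Lemma ham_cycle_cyc : ham_cycle n k (cyc_vs n g) (cyc_Es n g).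
Proof.
by have [? ? ?] := cyc_vs_vertices; have [? ? ?] := cyc_Es_hyperedges; split; split=> //;
   apply: cyc_consecutive.
Qed.

Lemma cyc_Es_Cset : [set E | E \in cyc_Es n g] = Cset n g.
Proof.
rewrite (@Cset_rcons_Posz n k) //; apply/eqP.
have [size_Es uniq_Es _] := cyc_Es_hyperedges.
rewrite eqEcard card_rot_orbit // cardsE (card_uniqP uniq_Es) size_Es leqnn andbT. apply/subsetP => E; rewrite inE cyc_Es_rot => /mapP [p _ ->].
exact: mem_rot_orbit.
Qed.

End Cycle.

Lemma ham_cycle_Gtot n k g : prime n -> 1 < k -> k < n -> inGtot n k g ->
  ham_cycle n k (cyc_vs n g) (cyc_Es n g) /\ [set E | E \in cyc_Es n g] = Cset n g.
Proof.
move=> n_prime k_gt1 kn /(inGtotP (prime_gt0 n_prime) (ltnW k_gt1)).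
move=> [[|c0 c] [m [-> sc c_gt0 cn]]]; first by move: sc => /=; lia.
by split; [apply: ham_cycle_cyc | apply: (@cyc_Es_Cset n k)].
Qed.

Definition maxv {n} (F : {set 'I_n.+1}) : nat := \max_(i in F) nat_of_ord i.

Section MinimalRotation.

Variable n : nat.
Hypothesis n_gt0 : 0 < n.
Implicit Types (E F : {set 'I_n.+1}).

Lemma rot_to_one E x : x \in E -> 0 < nat_of_ord x ->
  (inord 1 : 'I_n.+1) \in rot (n + 1 - x) E.
Proof.
move=> xE x_gt0; have xn : x <= n by rewrite -ltnS ltn_ord.
have -> : (inord 1 : 'I_n.+1) = inord (wrap n (x + (n + 1 - x))).
  by rewrite (_ : x + _ = 1 + n); [rewrite (@eq_wrap _ _ 1) ?wrap_id // modnDr | lia].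
exact: imset_f.
Qed.

(* Rotating b to 1 moves every y >= b down by b - 1 and every y < b up by n + 1 - b. *)
Lemma maxv_rot_to b a F : on_vertices F -> b \in F ->
  {in F, forall y : 'I_n.+1, y < b -> y <= a} -> maxv (rot (n + 1 - b) F) <= a + n + 1 - b.
Proof.
move/on_verticesP=> hF bF below; have /andP [b_gt0 bn] := hF b bF.
apply/bigmax_leqP => _ /imsetP [y yF ->]; rewrite val_inord_wrap //.
have /andP [y_gt0 yn] := hF y yF.
case: (ltnP y b) => [yb | b_le_y].
  by rewrite wrap_id; have := below y yF yb; lia.
rewrite (@eq_wrap _ _ (y + 1 - b)) ?wrap_id //; [lia | lia |].
by rewrite (_ : y + (n + 1 - b) = y + 1 - b + n) ?modnDr //; lia.
Qed.

Definition min_rot F : Prop :=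
  (inord 1 : 'I_n.+1) \in F /\
  forall t, (inord 1 : 'I_n.+1) \in rot t F -> maxv F <= maxv (rot t F).

Lemma exists_min_rot E x : on_vertices E -> x \in E ->
  exists2 F, F \in rot_orbit E & min_rot F.
Proof.
move=> hE xE; pose P (t : 'I_n) := (inord 1 : 'I_n.+1) \in rot t E.
have /andP [x_gt0 _] := on_verticesP _ hE x xE.
have P0 : P (Ordinal (ltn_pmod (n + 1 - x) n_gt0)).
  by rewrite /P /= (@eq_rot_mod _ _ (n + 1 - x)) ?modn_mod ?rot_to_one.
case: (arg_minnP (fun t : 'I_n => maxv (rot t E)) P0) => t Pt t_min.
exists (rot t E); first exact: mem_rot_orbit.
split=> // s; rewrite !rotD // (@eq_rot_mod _ (t + s) ((t + s) %% n)) ?modn_mod //.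
exact: (t_min (Ordinal (ltn_pmod (t + s) n_gt0))).
Qed.

Lemma min_rot_gap F a b : on_vertices F -> min_rot F -> b \in F ->
  {in F, forall y : 'I_n.+1, y < b -> y <= a} -> maxv F + b <= a + n + 1.
Proof.
move=> hF [oneF Fmin] bF below.
have /andP [b_gt0 bn] := on_verticesP _ hF b bF.
have := leq_trans (Fmin _ (rot_to_one bF b_gt0)) (maxv_rot_to hF bF below).
by lia.
Qed.

End MinimalRotation.

Lemma ltn_nth_sorted s i j : sorted ltn s -> i < size s -> j < size s ->
  (nth 0 s i < nth 0 s j) = (i < j).
Proof.
move=> ss i_lt j_lt; have mono := sorted_ltn_nth ltn_trans 0 ss.
case: (ltngtP i j) => [ij | ji | ->]; last exact: ltnn.
  exact: mono.
by apply/negbTE; rewrite -leqNgt ltnW // mono.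
Qed.

Lemma head_le_nth_sorted s i : sorted ltn s -> i < size s -> nth 0 s 0 <= nth 0 s i.
Proof. by case: i => // i ss i_lt; rewrite ltnW // ltn_nth_sorted //; lia. Qed.

Definition gaps (s : seq nat) : seq nat :=
  [seq nth 0 s j.+1 - nth 0 s j | j <- iota 0 (size s).-1].

Lemma size_gaps s : size (gaps s) = (size s).-1.
Proof. by rewrite size_map size_iota. Qed.

Lemma nth_gaps s j : j < (size s).-1 -> nth 0 (gaps s) j = nth 0 s j.+1 - nth 0 s j.
Proof. by move=> js; rewrite (nth_map 0) ?size_iota // nth_iota. Qed.

Lemma sumn_take_gaps s i : sorted ltn s -> nth 0 s 0 = 1 -> i < size s ->
  sumn (take i (gaps s)) = nth 0 s i - 1.
Proof.
move=> ss s0; elim: i => [|i IH] i_lt; first by rewrite take0 s0.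
have i_lt' : i < (size s).-1 by lia.
rewrite (take_nth 0) ?size_gaps // sumn_rcons IH ?(ltnW i_lt) // nth_gaps //.
have := ltn_nth_sorted ss (ltnW i_lt) i_lt; rewrite ltnSn.
by have := head_le_nth_sorted ss (ltnW i_lt); rewrite s0; lia.
Qed.

Lemma rep_nat_gaps s : sorted ltn s -> nth 0 s 0 = 1 -> rep_nat (size s) (gaps s) = s.
Proof.
move=> ss s0; apply: (@eq_from_nth _ 0); first exact: size_rep_nat.
rewrite size_rep_nat => i i_lt; rewrite nth_mkseq // sumn_take_gaps //.
by have := head_le_nth_sorted ss i_lt; rewrite s0; lia.
Qed.

Definition elems {n} (F : {set 'I_n.+1}) : seq nat := [seq x <- iota 1 n | inord x \in F].

Section Elements.

Variable n : nat.
Implicit Types (F : {set 'I_n.+1}).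

Lemma mem_elems F x : (x \in elems F) = (0 < x <= n) && (inord x \in F).
Proof. by rewrite mem_filter mem_iota andbC; congr (_ && _); apply/idP/idP; lia. Qed.

Lemma sorted_elems F : sorted ltn (elems F).
Proof. exact/sorted_filter/iota_ltn_sorted/ltn_trans. Qed.

Lemma elems_uniq F : uniq (elems F).
Proof. exact/filter_uniq/iota_uniq. Qed.

Lemma elems_le F : all (fun x => x <= n) (elems F).
Proof. by apply/allP => x; rewrite mem_elems => /andP [/andP [_ ->]]. Qed.

Lemma toset_elems F : on_vertices F -> toset n (elems F) = F.
Proof.
move/on_verticesP=> hF; apply/setP => i; rewrite inE mem_elems inord_val.
by case: (boolP (i \in F)) => iF; rewrite ?andbF // andbT hF.
Qed.

Lemma size_elems F : on_vertices F -> size (elems F) = #|F|.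
Proof.
by move=> hF; rewrite -{2}(toset_elems hF) card_toset ?elems_uniq ?elems_le.
Qed.

Lemma nth_elems F i : i < size (elems F) ->
  [/\ 0 < nth 0 (elems F) i <= n & (inord (nth 0 (elems F) i) : 'I_n.+1) \in F].
Proof. by move=> i_lt; have /[!mem_elems] /andP [] := mem_nth 0 i_lt. Qed.

Lemma head_elems F : (inord 1 : 'I_n.+1) \in F -> 0 < n -> nth 0 (elems F) 0 = 1.
Proof.
move=> oneF n_gt0; have iotaE : iota 1 n = 1 :: iota 2 n.-1 by rewrite -{1}(prednK n_gt0).
by rewrite /elems iotaE /= oneF.
Qed.

End Elements.

Lemma size_le_sumn c : all (fun x => 0 < x) c -> size c <= sumn c.
Proof. by elim: c => //= x c IH /andP [x_gt0 /IH]; lia. Qed.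

Lemma sumn_le_size_mul c d : all (fun x => x <= d) c -> sumn c <= size c * d.
Proof. by elim: c => //= x c IH /andP [xd /IH]; rewrite mulSn; lia. Qed.

(* sigma <= (k - 1) (n - sigma) says k (n - sigma) >= n, i.e. n - sigma >= ceil (n / k). *)
Lemma le_sub_ceil_div n k sig : 0 < k -> sig <= k.-1 * (n - sig) ->
  sig <= n - (n + k.-1) %/ k.
Proof.
move=> k_gt0 h; suff : (n + k.-1) %/ k < (n - sig).+1 by lia.
rewrite ltn_divLR // mulSn; move: h; set X := n - sig.
have -> : k.-1 * X = k * X - X by rewrite -subn1 mulnBl mul1n.
have : X <= k * X by rewrite leq_pmull.
by rewrite mulnC; lia.
Qed.

Lemma inGtot_rcons n k c : 0 < k -> size c = k.-1 -> all (fun x => 0 < x <= n - sumn c) c ->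
  inGtot n k (rcons [seq Posz x | x <- c]
    (if sumn c <= n %/ 2 then (- Posz (sumn c))%R else Posz (n - sumn c))).
Proof.
move=> k_gt0 sc c_range; exists (sumn c); split; last by exists c.
  by rewrite -sc size_le_sumn //; apply: sub_all c_range => x /andP [].
apply: le_sub_ceil_div => //; rewrite -sc sumn_le_size_mul //.
by apply: sub_all c_range => x /andP [].
Qed.

Lemma gaps_elems_min_rot n (F : {set 'I_n.+1}) : 0 < n -> on_vertices F -> min_rot F ->
  all (fun x => 0 < x <= n - sumn (gaps (elems F))) (gaps (elems F)).
Proof.
move=> n_gt0 hF Fmin; have ss := sorted_elems F; set s := elems F in ss *.
have s0 : nth 0 s 0 = 1 by apply: head_elems => //; case: Fmin.
have s_gt0 : 0 < size s by case: s s0 {ss}.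
have L_lt : (size s).-1 < size s by rewrite prednK.
have sum_gaps : sumn (gaps s) = nth 0 s (size s).-1 - 1.
  by rewrite -sumn_take_gaps // take_oversize // size_gaps.
have L_max : nth 0 s (size s).-1 <= maxv F.
  have [/andP [_ Ln] LF] := nth_elems L_lt.
  by apply: leq_trans (leq_bigmax_cond _ LF); rewrite inordK.
have L_ge1 : 1 <= nth 0 s (size s).-1 by rewrite -{1}s0 head_le_nth_sorted.
apply/allP => x /mapP [j]; rewrite mem_iota /= => j_lt ->.
have j1_lt : j.+1 < size s by lia.
have [/andP [_ bn] bF] := nth_elems j1_lt.
have below : {in F, forall y : 'I_n.+1,
    y < (inord (nth 0 s j.+1) : 'I_n.+1) -> y <= nth 0 s j}.
  move=> y yF; rewrite inordK //.
  have /andP [y_gt0 yn] := on_verticesP _ hF y yF.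
  have ys : nat_of_ord y \in s by rewrite mem_elems y_gt0 yn inord_val.
  have iy : index (nat_of_ord y) s < size s by rewrite index_mem.
  rewrite -{1 2}(nth_index 0 ys) !ltn_nth_sorted // ltnS => iyj.
  by rewrite leqNgt ltn_nth_sorted ?(ltnW j1_lt) // -leqNgt.
have := min_rot_gap n_gt0 hF Fmin bF below; rewrite inordK // -/s.
by have := ltn_nth_sorted ss (ltnW j1_lt) j1_lt; rewrite ltnSn sum_gaps; lia.
Qed.

Lemma rot_orbit_hyperedge n k B E : 0 < n -> hyperedge n k B -> E \in rot_orbit B ->
  hyperedge n k E.
Proof.
move=> n_gt0 /andP [/eqP cB hB] /mem_rot_orbitP [t ->].
by rewrite /hyperedge card_rot // cB eqxx; apply: rot_on_vertices.
Qed.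

Lemma hyperedge_in_Cset n k E : prime n -> 0 < k -> hyperedge n k E ->
  exists2 g, inGtot n k g & E \in Cset n g.
Proof.
move=> n_prime k_gt0 hE; have n_gt0 := prime_gt0 n_prime.
have /andP [/eqP cE vE] := hE.
have [x xE] : exists x, x \in E by apply/set0Pn; rewrite -card_gt0 cE.
have [F FE Fmin] := exists_min_rot n_gt0 vE xE.
have /andP [/eqP cF vF] := rot_orbit_hyperedge n_gt0 hE FE.
have ss := sorted_elems F; set s := elems F in ss *.
have s0 : nth 0 s 0 = 1 by apply: head_elems => //; case: Fmin.
have size_s : size s = k by rewrite size_elems.
have c_range := gaps_elems_min_rot n_gt0 vF Fmin; rewrite -/s in c_range.
have cn : sumn (gaps s) < n.
  by case: (gaps s) c_range => [|c0 c] //= /andP [/andP [c0_gt0 c0_le] _]; lia.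
exists (rcons [seq Posz x | x <- gaps s]
  (if sumn (gaps s) <= n %/ 2 then (- Posz (sumn (gaps s)))%R else Posz (n - sumn (gaps s)))).
  by apply: inGtot_rcons; rewrite ?size_gaps ?size_s.
rewrite (@Cset_rcons_Posz n k) ?size_gaps ?size_s //.
by rewrite -size_s rep_nat_gaps // toset_elems // (rot_orbit_eq n_gt0 FE) rot_orbit_refl.
Qed.

Lemma card_hyperedges n k : #|hyperedges n k| = 'C(n, k).
Proof.
have lift_inj0 := @lift_inj n.+1 ord0.
have -> : hyperedges n k = [set lift ord0 @: S | S : {set 'I_n} in [set S : {set 'I_n} | #|S| == k]].
  apply/setP => E; rewrite inE; apply/idP/imsetP.
  - case/andP => /eqP cE /forall_inP vE.
    have liftE : lift ord0 @: (lift ord0 @^-1: E) = E.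
      apply/setP => i; apply/imsetP/idP => [[j] | iE]; first by rewrite inE => jE ->.
      case: (unliftP ord0 i) => [j ij | i0]; first by exists j; rewrite // inE -ij.
      by move: (vE i iE); rewrite i0.
    exists (lift ord0 @^-1: E) => //.
    by rewrite inE -cE; have := card_imset (lift ord0 @^-1: E) lift_inj0; rewrite liftE => ->.
  - case=> S; rewrite inE => /eqP cS ->; rewrite /hyperedge card_imset // cS eqxx.
    by apply/forall_inP => _ /imsetP [j _ ->]; rewrite lift0.
by rewrite card_imset ?card_draws ?card_ord //; apply: imset_inj.
Qed.

Definition Cset_family n k : {set {set {set 'I_n.+1}}} :=
  [set rot_orbit E | E in hyperedges n k].

Section Family.

Variables n k : nat.
Hypotheses (n_prime : prime n) (k_gt0 : 0 < k) (kn : k < n).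

Let n_gt0 : 0 < n := prime_gt0 n_prime.

Let hyperedge_vertices E : hyperedge n k E -> on_vertices E. Proof. by case/andP. Qed.

Let card_hyperedge E : hyperedge n k E -> 0 < #|E| < n.
Proof. by case/andP => /eqP ->; rewrite k_gt0. Qed.

Lemma mem_Cset_family X :
  X \in Cset_family n k <-> exists g, inGtot n k g /\ X = Cset n g.
Proof.
split=> [/imsetP [E /[!inE] hE ->] | [g [gG ->]]].
  have [g gG Eg] := hyperedge_in_Cset n_prime k_gt0 hE.
  have [B hB CB] := Cset_hyperedge n_gt0 k_gt0 gG.
  by exists g; split=> //; rewrite CB; apply: (rot_orbit_eq n_gt0); rewrite -CB.
by have [B hB ->] := Cset_hyperedge n_gt0 k_gt0 gG; apply: imset_f; rewrite inE.
Qed.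

Lemma Cset_eq_or_disjoint g g' : inGtot n k g -> inGtot n k g' ->
  Cset n g = Cset n g' \/ [disjoint Cset n g & Cset n g'].
Proof.
move=> /(Cset_hyperedge n_gt0 k_gt0) [B _ ->] /(Cset_hyperedge n_gt0 k_gt0) [B' _ ->].
exact: rot_orbit_eq_or_disjoint.
Qed.

Lemma mem_hyperedges_Cset E :
  E \in hyperedges n k <-> exists g, inGtot n k g /\ E \in Cset n g.
Proof.
rewrite inE; split=> [/(hyperedge_in_Cset n_prime k_gt0) [g] | [g [gG]]]; first by exists g.
by have [B hB ->] := Cset_hyperedge n_gt0 k_gt0 gG; apply: rot_orbit_hyperedge.
Qed.

Lemma card_Cset_family : #|Cset_family n k| = 'C(n, k) %/ n.
Proof.
have partition : partition (Cset_family n k) (hyperedges n k).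
  apply/and3P; split.
  - apply/eqP/setP => E; apply/bigcupP/idP => [[_ /imsetP [B hB ->] EB] | hE].
      by move: hB; rewrite !inE => hB; apply: rot_orbit_hyperedge EB.
    exists (rot_orbit E); first exact: imset_f.
    by rewrite rot_orbit_refl // hyperedge_vertices // -inE.
  - apply/trivIsetP => _ _ /imsetP [E _ ->] /imsetP [E' _ ->] EE'.
    by case: (rot_orbit_eq_or_disjoint n_gt0 E E') => // eq; rewrite eq eqxx in EE'.
  - apply/imsetP => [[E /[!inE] hE /esym /eqP]]; apply/negP; apply/set0Pn.
    by exists E; rewrite rot_orbit_refl // hyperedge_vertices.
rewrite -(card_hyperedges n k) (card_partition partition) (eq_bigr (fun=> n)).
  by rewrite sum_nat_const mulnK.
by move=> _ /imsetP [E /[!inE] hE ->]; rewrite card_rot_orbit ?card_hyperedge ?hyperedge_vertices.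
Qed.

End Family.

Lemma cover_injective_card (T : finType) (A : {set T}) N (f : 'I_N -> T) :
  #|A| = N -> injective f -> (forall i, f i \in A) -> forall a, a \in A -> exists i, a = f i.
Proof.
move=> cA f_inj fA a; suff -> : A = [set f i | i in 'I_N].
  by case/imsetP => i _ ->; exists i.
apply/eqP; rewrite eq_sym eqEcard card_imset // card_ord cA leqnn andbT.
by apply/subsetP => _ /imsetP [i _ ->].
Qed.

Theorem theorem1 (n k : nat) :
  prime n -> 2 <= k -> 2 * k < n ->
  ( (exists Fam : {set {set {set 'I_n.+1}}},
        (forall X, X \in Fam <-> exists g, inGtot n k g /\ X = Cset n g) /\
        #|Fam| = 'C(n, k) %/ n)
    /\ (forall g g', inGtot n k g -> inGtot n k g' ->
          Cset n g = Cset n g' \/ [disjoint Cset n g & Cset n g'])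
    /\ (forall E : {set 'I_n.+1},
          E \in hyperedges n k <-> exists g, inGtot n k g /\ E \in Cset n g) )
  /\ (forall gs : 'I_('C(n, k) %/ n) -> seq int,
        (forall i, inGtot n k (gs i)) ->
        (forall i j, i != j -> Cset n (gs i) != Cset n (gs j)) ->
        (forall i, ham_cycle n k (cyc_vs n (gs i)) (cyc_Es n (gs i)))
        /\ (forall i j, i != j ->
              [disjoint [set E | E \in cyc_Es n (gs i)] & [set E | E \in cyc_Es n (gs j)]])
        /\ (forall E, E \in hyperedges n k -> exists i, E \in cyc_Es n (gs i))).
Proof.
move=> n_prime k_gt1 kn2; have kn : k < n by lia.
have k_gt0 : 0 < k by lia.
have famP := mem_Cset_family n_prime k_gt0.
split.
  split; first by exists (Cset_family n k); split=> //; apply: card_Cset_family.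
  by split; [apply: Cset_eq_or_disjoint | apply: mem_hyperedges_Cset].
move=> gs gsG gs_neq; have cyc i := ham_cycle_Gtot n_prime k_gt1 kn (gsG i).
split; first by move=> i; case: (cyc i).
split=> [i j ij | E /(mem_hyperedges_Cset n_prime k_gt0) [g [gG Eg]]].
  rewrite (cyc i).2 (cyc j).2.
  case: (Cset_eq_or_disjoint n_prime k_gt0 (gsG i) (gsG j)) => // gs_eq.
  by move: (gs_neq i j ij); rewrite gs_eq eqxx.
have gs_inj : injective (fun i => Cset n (gs i)).
  by move=> i j; apply: contra_eq => /gs_neq.
have [i CE] : exists i, Cset n g = Cset n (gs i).
  apply: (cover_injective_card (card_Cset_family n_prime k_gt0 kn) gs_inj).
  - by move=> i; apply/famP; exists (gs i).
  - by apply/famP; exists g.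
by exists i; move: Eg; rewrite CE -(cyc i).2 inE.
Qed.
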